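(* Let $G$ be one of the groups $\mathrm{GU}_{2n}(q)$, $\mathrm{GU}_{2n+1}(q)$, $\mathrm{SO}_{2n+1}(q)$, $\mathrm{Sp}_{2n}(q)$ with $n\ge1$, viewed as a finite group with split $BN$-pair as described in the context. Let $L$ and $M$ be pure Levi subgroups of $G$ and let $x\in N$. Then $xLx^{-1}\cap M$ is a pure Levi subgroup of $G$.
   Context: Let $q$ be a power of a prime $p$. For $n\ge1$ the groups $G=\mathrm{GU}_{2n}(q)$, $\mathrm{GU}_{2n+1}(q)$, $\mathrm{SO}_{2n+1}(q)$, $\mathrm{Sp}_{2n}(q)$ have a natural split $BN$-pair of characteristic $p$ whose Weyl group $W=N/(B\cap N)$ is of type $B_n$, with simple reflections $S=\{s_1,\dots,s_n\}$ numbered so that $s_1,s_2$ are joined by the double edge of the Coxeter diagram and $s_i,s_{i+1}$ by a simple edge for $i\ge2$. For $I\subseteq S$ let $L_I$ denote the corresponding standard Levi subgroup. A subset $I\subseteq S$ is left connected if $I=\{s_1,\dots,s_r\}$ for some $0\le r\le n$. A Levi subgroup $L$ of $G$ is called pure if it is conjugate under $N$ to a standard Levi subgroup $L_I$ with $I$ left connected. *)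

From mathcomp Require Import all_boot all_order all_algebra.
Set Implicit Arguments. Unset Strict Implicit. Unset Printing Implicit Defensive.
Import GRing.Theory.
Local Open Scope ring_scope.

Inductive cgtype := GU_even | GU_odd | SO_odd | Sp_even.

Definition cg_is_unitary (t : cgtype) : bool :=
  match t with GU_even | GU_odd => true | _ => false end.

Definition dimN (t : cgtype) (n : nat) : nat :=
  match t with GU_even | Sp_even => n.*2 | _ => (n.*2).+1 end.

Section ClassicalGroups.
(* F is the field of definition: F_q for SO/Sp, F_{q^2} for GU. *)
Variables (t : cgtype) (q n : nat) (F : finFieldType).
Local Notation N := (dimN t n).
Local Notation mx := 'M[F]_N.

(* Coordinates 0..N-1; coordinate k is paired with N-1-k (hyperbolic pairs),
   the middle coordinate n is anisotropic when N is odd. *)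

Definition form_sp : mx :=
  \matrix_(i, j) (if (i + j == N.-1)%N then (if (i < n)%N then 1 else -1) else 0).

Definition form_herm : mx :=
  \matrix_(i, j) (if (i + j == N.-1)%N then 1 else 0).

Definition frob_mx (A : mx) : mx := map_mx (fun a => a ^+ q) A.

Definition quad (v : 'cV[F]_N) : F :=
  \sum_(k < N) (if (k < n)%N then v k 0 * v (rev_ord k) 0
                else if (k == n :> nat) then v k 0 ^+ 2 else 0).

Definition classical_group : {set mx} :=
  match t with
  | GU_even | GU_odd => [set A : mx | (frob_mx A)^T *m form_herm *m A == form_herm]
  | SO_odd => [set A : mx | [forall v : 'cV[F]_N, quad (A *m v) == quad v]
                            && (\det A == 1)]
  | Sp_even => [set A : mx | A^T *m form_sp *m A == form_sp]
  end.

Definition bn_B : {set mx} :=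
  [set A in classical_group | [forall i : 'I_N, forall j : 'I_N, (j < i)%N ==> (A i j == 0)]].

Definition bn_N : {set mx} :=
  [set A in classical_group | [forall i : 'I_N, #|[set j : 'I_N | A i j != 0]| == 1%N]].

(* Simple reflections s_1, ..., s_n are indexed by i : 'I_n (i <-> s_{i+1}).
   s_1 (double edge end) acts on the central coordinates n-1 .. N-n;
   s_{i+1} (i >= 1) swaps coordinates n-1-i, n-i (and their mirrors).
   joined I j k: coordinates j, k lie in a common block of the Levi L_I. *)
Definition joined (I : {set 'I_n}) : rel 'I_N := fun j k =>
  [exists i in I,
    if (i == 0 :> nat) then
      ((n.-1 <= j <= N - n) && (n.-1 <= k <= N - n))%N
    else
      let a := (n.-1 - i)%N in let b := (n - i)%N in
      [|| (j == a :> nat) && (k == b :> nat),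
          (j == b :> nat) && (k == a :> nat),
          (j == (N.-1 - a)%N :> nat) && (k == (N.-1 - b)%N :> nat)
        | (j == (N.-1 - b)%N :> nat) && (k == (N.-1 - a)%N :> nat)]].

Definition std_levi (I : {set 'I_n}) : {set mx} :=
  [set A in classical_group |
     [forall j : 'I_N, forall k : 'I_N, (A j k != 0) ==> connect (joined I) j k]].

Definition left_connected (r : nat) : {set 'I_n} := [set i : 'I_n | (i < r)%N].

Definition conjm (x : mx) (S : {set mx}) : {set mx} :=
  [set x *m A *m invmx x | A in S].

Definition pure_levi (L : {set mx}) : Prop :=
  exists2 x, x \in bn_N &
  exists2 r, (r <= n)%N & L = conjm x (std_levi (left_connected r)).

End ClassicalGroups.

(* A Levi-type subgroup of G is described by a set C of coordinates: it consists
   of the elements of G acting diagonally outside C.  The standard Levi subgroup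
   attached to {s_1, ..., s_r} has a central interval of coordinates, and
   conjugating by a monomial x in N pulls C back along the coordinate permutation
   of x.  Since x preserves the form, that permutation commutes with the pairing
   j <-> N-1-j of the hyperbolic basis, so the coordinate set of a pure Levi
   subgroup is closed under the pairing and contains its fixed point.
   Conversely every such set is carried onto a central interval by sorting the
   first half of the coordinates and mirroring, and this permutation is realised
   by a (signed) permutation matrix in N.  Thus pure Levi subgroups are exactly
   the subgroups attached to such admissible sets; as x L x^-1 :&: M is attached
   to the intersection of two of them, it is again pure. *)

From Pilot Require Import Defs.
From mathcomp Require Import all_boot all_algebra zify.
From mathcomp Require Import fingroup perm pgroup finfield.
Set Implicit Arguments. Unset Strict Implicit. Unset Printing Implicit Defensive.
Import GRing.Theory.

(** * Coordinate sets stable under the pairing *)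

Lemma exists_rank_split (P : pred nat) n : exists f : nat -> nat,
  [/\ forall k, k < n -> f k < n,
      forall k k', k < n -> k' < n -> f k = f k' -> k = k'
    & forall k, k < n -> (n - count P (iota 0 n) <= f k) = P k].
Proof.
pose low := filter (predC P) (iota 0 n); pose l := low ++ filter P (iota 0 n).
have l_all k : k < n -> k \in l.
  by move=> kn; rewrite mem_cat !mem_filter mem_iota /= kn; case: (P k).
have size_l : size l = n by rewrite size_cat !size_filter addnC count_predC size_iota.
have size_low : size low = n - count P (iota 0 n).
  by have := count_predC P (iota 0 n); rewrite size_iota /low size_filter; lia.
exists (index^~ l); split=> [k kn|k k' kn k'n eq_kk'|k kn].
- by rewrite -size_l index_mem l_all.
- by rewrite -(nth_index 0 (l_all _ kn)) -(nth_index 0 (l_all _ k'n)) eq_kk'.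
rewrite index_cat -size_low.
have -> : (k \in low) = ~~ P k by rewrite mem_filter mem_iota /= kn andbT.
case Pk: (P k) => /=; first by rewrite leq_addr.
by apply/negbTE; rewrite -ltnNge index_mem mem_filter mem_iota /= Pk kn.
Qed.

Lemma exists_mirror_perm m n (f : nat -> nat) : n.*2 <= m ->
  (forall k, k < n -> f k < n) -> (forall k k', k < n -> k' < n -> f k = f k' -> k = k') ->
  exists s : {perm 'I_m}, [/\ forall j, s (rev_ord j) = rev_ord (s j),
    forall j, (s j < n) = (j < n), forall j : 'I_m, j < n -> s j = f j :> nat
  & forall j : 'I_m, n <= j < m - n -> s j = j :> nat].
Proof.
move=> nm f_lt f_inj.
have f_lt' k : (f k < n) || (n <= k) by case: (ltnP k n) => [/f_lt->|] //; rewrite orbT.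
pose sn j := if j < n then f j else if j < m - n then j else m.-1 - f (m.-1 - j).
have sn_lt (j : 'I_m) : sn j < m.
  have := ltn_ord j; have := f_lt' (m.-1 - j); rewrite /sn; case: ifP => jn.
    by have := f_lt _ jn; lia.
  by case: ifP; lia.
have sn_inj : injective (fun j => Ordinal (sn_lt j)).
  move=> j j' /(congr1 val) /=; rewrite /sn => eq_s; apply: ord_inj.
  have := ltn_ord j; have := ltn_ord j'; have := f_lt' j; have := f_lt' j'.
  have := f_lt' (m.-1 - j); have := f_lt' (m.-1 - j').
  have := f_inj j j'; have := f_inj (m.-1 - j) (m.-1 - j').
  by move: eq_s; repeat case: ifP => ?; lia.
exists (perm sn_inj); split=> [j|j|j jn|j]; rewrite !permE /= /sn.
- apply: ord_inj => /=.
  have := ltn_ord j; have := f_lt' j; have := f_lt' (m.-1 - j).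
  have -> : m.-1 - (m - j.+1) = j by have := ltn_ord j; lia.
  rewrite (_ : m - j.+1 = m.-1 - j); last by lia.
  by repeat case: ifP => ?; lia.
- have := ltn_ord j; have := f_lt' j; have := f_lt' (m.-1 - j).
  by repeat case: ifP => ?; lia.
- by rewrite jn.
by case/andP=> /leq_gtF -> ->.
Qed.

Section Reversal.
Variable m : nat.
Implicit Types (C D : {set 'I_m}).

(* the coordinate sets of the pure Levi subgroups, see pure_leviP *)
Definition rev_admissible C :=
  [forall j, (rev_ord j \in C) == (j \in C)] && [forall j, (rev_ord j == j) ==> (j \in C)].

(* the coordinates moved by the standard Levi subgroup of {s_1, ..., s_r} *)
Definition central n r : {set 'I_m} := [set j : 'I_m | n - r <= j <= m.-1 - (n - r)].

Lemma rev_admissibleI C D : rev_admissible C -> rev_admissible D -> rev_admissible (C :&: D).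
Proof.
case/andP=> /forallP revC /forallP fixC /andP[/forallP revD /forallP fixD].
apply/andP; split; apply/forallP => j; rewrite !inE; first by rewrite (eqP (revC j)) (eqP (revD j)).
by apply/implyP => fix_j; rewrite (implyP (fixC j)) ?(implyP (fixD j)).
Qed.

Lemma rev_admissible_preim (s : 'I_m -> 'I_m) C :
  {morph s : j / rev_ord j} -> rev_admissible C -> rev_admissible (s @^-1: C).
Proof.
move=> s_rev /andP[/forallP revC /forallP fixC].
apply/andP; split; apply/forallP => j; rewrite !inE; first by rewrite s_rev.
by apply/implyP => /eqP fix_j; apply: (implyP (fixC _)); rewrite -s_rev fix_j.
Qed.

Lemma rev_central n r j : (rev_ord j \in central n r) = (j \in central n r).
Proof. by rewrite !inE /=; have := ltn_ord j; lia. Qed.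

Lemma rev_admissible_central n r : n.*2 <= m -> rev_admissible (central n r).
Proof.
move=> nm; apply/andP; split; apply/forallP => j; first by rewrite rev_central.
by apply/implyP => /eqP/(congr1 val); rewrite inE /=; have := ltn_ord j; lia.
Qed.

(* the first two conditions on s say that s is the coordinate permutation of an
   element of N *)
Lemma rev_admissible_centralize n C : n.*2 <= m <= n.*2.+1 -> rev_admissible C ->
  exists s : {perm 'I_m}, exists2 r, r <= n &
    [/\ forall j, s (rev_ord j) = rev_ord (s j), forall j, (s j < n) = (j < n)
      & s @^-1: central n r = C].
Proof.
case/andP=> nm mn /andP[/forallP revC /forallP fixC].
pose P k := [exists j : 'I_m, (j == k :> nat) && (j \in C)].
have PE (j : 'I_m) : P j = (j \in C).
  by apply/existsP/idP => [[j' /andP[/eqP/val_inj -> //]]|jC]; exists j; rewrite eqxx.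
have [f [f_lt f_inj f_P]] := exists_rank_split P n.
have [s [s_rev s_lt s_low s_mid]] := exists_mirror_perm nm f_lt f_inj.
exists s, (count P (iota 0 n)); first by rewrite -[X in _ <= X](size_iota 0 n) count_size.
split=> //.
have low (j : 'I_m) : j < n -> (s j \in central n (count P (iota 0 n))) = (j \in C).
  move=> jn; rewrite inE s_low // -PE -f_P //; have := f_lt _ jn; lia.
apply/setP => j; rewrite inE; case: (ltnP j n) => [|nj]; first exact: low.
case: (ltnP j (m - n)) => [jmn|mnj].
  have fix_j : rev_ord j == j by apply/eqP/val_inj => /=; lia.
  by rewrite (implyP (fixC j) fix_j) inE s_mid ?nj //; lia.
by rewrite -rev_central -s_rev low -?(eqP (revC j)) //=; have := ltn_ord j; lia.
Qed.

End Reversal.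

Local Open Scope ring_scope.

(** * Monomial matrices and block subgroups *)

Section MonomialMatrices.
Variables (F : fieldType) (m : nat).
Implicit Types (x A B : 'M[F]_m).

Definition monomial x := [forall i : 'I_m, #|[set j : 'I_m | x i j != 0]| == 1%N].

Definition mono_col x (i : 'I_m) : 'I_m := odflt i [pick j | x i j != 0].

Lemma mono_colP x i j : monomial x -> (x i j != 0) = (j == mono_col x i).
Proof.
move=> /forallP/(_ i)/cards1P [j0 supp_i].
have nz_j0 k : (x i k != 0) = (k == j0).
  by have := congr1 (fun S : {set 'I_m} => k \in S) supp_i; rewrite !inE.
rewrite /mono_col; case: pickP => [k|/(_ j0)] /=; last by rewrite nz_j0 eqxx.
by rewrite !nz_j0 => /eqP->.
Qed.

Lemma mono_col_neq0 x i : monomial x -> x i (mono_col x i) != 0.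
Proof. by move=> mx; rewrite mono_colP. Qed.

Lemma mono_col_zero x i j : monomial x -> j != mono_col x i -> x i j = 0.
Proof. by move=> mx /negbTE; rewrite -mono_colP // => /negbFE/eqP. Qed.

Lemma monomial_supp x (s : 'I_m -> 'I_m) :
  (forall i j, (x i j != 0) = (j == s i)) -> monomial x /\ mono_col x =1 s.
Proof.
move=> supp_x; have mx : monomial x.
  apply/forallP => i; have -> : [set j | x i j != 0] = [set s i].
    by apply/setP => j; rewrite !inE supp_x.
  by rewrite cards1.
by split=> // i; apply/eqP; rewrite eq_sym -mono_colP // supp_x.
Qed.

Variable x : 'M[F]_m.
Hypotheses (mx : monomial x) (ux : x \in unitmx).

Lemma mono_col_surj j : exists i, mono_col x i = j.
Proof.
case: (pickP (fun i => mono_col x i == j)) => [i /eqP|not_hit]; first by exists i.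
have := mulVmx ux; move/matrixP/(_ j j); rewrite !mxE eqxx big1 => [/eqP|k _].
  by rewrite eq_sym oner_eq0.
by rewrite (@mono_col_zero _ k) ?mulr0 // eq_sym not_hit.
Qed.

Lemma mono_col_inj : injective (mono_col x).
Proof.
pose g j := odflt j [pick i | mono_col x i == j].
have gK : cancel g (mono_col x).
  move=> j; rewrite /g; case: pickP => [i /eqP //|not_hit] /=.
  by have [i hit] := mono_col_surj j; move: (not_hit i); rewrite hit eqxx.
exact/can_inj/(bij_can_sym (injF_bij (can_inj gK))).
Qed.

Lemma mono_col_mul_delta i :
  x *m delta_mx (mono_col x i) 0 = x i (mono_col x i) *: delta_mx i (0 : 'I_1).
Proof.
apply/matrixP => k z; rewrite (ord1 z) !mxE (big_only1 (mono_col x i)) //=; last first.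
  by move=> j ji _; rewrite !mxE (negbTE ji) mulr0.
rewrite !mxE !eqxx /= mulr1 andbT; case: (eqVneq k i) => [->|ki]; first by rewrite mulr1.
by rewrite mulr0n mulr0 mono_col_zero // (inj_eq mono_col_inj) eq_sym.
Qed.

Lemma monomial_conj_supp A B i l : B *m x = x *m A ->
  (B i l != 0) = (A (mono_col x i) (mono_col x l) != 0).
Proof.
move=> /matrixP/(_ i (mono_col x l)); rewrite !mxE (big_only1 l) // => [|k kl _].
  rewrite (big_only1 (mono_col x i)) // => [E|k ki _]; last first.
    by rewrite (@mono_col_zero x) ?mul0r // eq_sym.
  have := congr1 (fun a => a != 0) E.
  by rewrite /= !mulf_eq0 !negb_or !mono_col_neq0 ?andbT.
by rewrite (@mono_col_zero x) ?mulr0 // (inj_eq mono_col_inj) eq_sym.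
Qed.

End MonomialMatrices.

Section MatrixGroups.
Variables (F : fieldType) (m : nat).

Definition mx_group_closed (S : {pred 'M[F]_m}) := [/\ {subset S <= unitmx},
  {in S &, forall A B, A *m B \in S} & {in S, forall A, invmx A \in S}].

Lemma eq_mx_group_closed (S1 S2 : {pred 'M[F]_m}) :
  S1 =i S2 -> mx_group_closed S1 -> mx_group_closed S2.
Proof.
move=> eqS [S1u S1M S1V]; split=> [A|A B|A]; rewrite -!eqS.
- exact: S1u.
- exact: S1M.
exact: S1V.
Qed.

Lemma mx_group_closed_conj (S : {pred 'M[F]_m}) x A : mx_group_closed S ->
  x \in S -> A \in S -> x *m A *m invmx x \in S.
Proof. by case=> _ SM SV xS AS; rewrite !SM ?SV. Qed.

Lemma mx_group_closed_conjV (S : {pred 'M[F]_m}) x A : mx_group_closed S ->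
  x \in S -> A \in S -> invmx x *m A *m x \in S.
Proof. by case=> _ SM SV xS AS; rewrite !SM ?SV. Qed.

End MatrixGroups.

Section BlockSubgroups.
Variables (F : finFieldType) (m : nat) (G : {set 'M[F]_m}).
Implicit Types (x A : 'M[F]_m) (C D : {set 'I_m}).

Definition block_supp C (j k : 'I_m) := (j == k) || (j \in C) && (k \in C).

Definition levi_block C :=
  [set A in G | [forall j, forall k, (A j k != 0) ==> block_supp C j k]].

Definition mono_preim x C := mono_col x @^-1: C.

Lemma levi_blockI C D : levi_block C :&: levi_block D = levi_block (C :&: D).
Proof.
have suppI j k : block_supp (C :&: D) j k = block_supp C j k && block_supp D j k.
  by rewrite /block_supp !inE -orb_andr andbACA.
apply/setP => A; rewrite !inE andbACA andbb; congr (_ && _).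
apply/andP/forallP => [[/forallP sC /forallP sD] j|sCD].
  apply/forallP => k; apply/implyP => nz.
  by rewrite suppI (implyP (forallP (sC j) k)) ?(implyP (forallP (sD j) k)).
split; apply/forallP => j; apply/forallP => k; apply/implyP => nz;
  by have := implyP (forallP (sCD j) k) nz; rewrite suppI => /andP[].
Qed.

Lemma levi_block_conj x C : mx_group_closed (mem G) -> x \in G -> monomial x ->
  [set x *m A *m invmx x | A in levi_block C] = levi_block (mono_preim x C).
Proof.
move=> closedG xG mx; have ux : x \in unitmx by case: closedG => Gu _ _; exact: Gu.
have supp_preim i l : block_supp (mono_preim x C) i l =
    block_supp C (mono_col x i) (mono_col x l).
  by rewrite /block_supp !inE (inj_eq (mono_col_inj mx ux)).
apply/setP => B; apply/imsetP/idP => [[A] | ].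
  rewrite inE => /andP [AG /forallP suppA] ->; rewrite inE mx_group_closed_conj //=.
  apply/forallP => i; apply/forallP => l; apply/implyP.
  rewrite (monomial_conj_supp (A:=A) mx ux) ?mulmxKV // supp_preim.
  exact: (implyP (forallP (suppA _) _)).
rewrite inE => /andP [BG /forallP suppB].
exists (invmx x *m B *m x); last by rewrite !mulmxA mulmxV // mul1mx mulmxK.
rewrite inE mx_group_closed_conjV //=; apply/forallP => j; apply/forallP => k; apply/implyP.
have [[i <-] [l <-]] := (mono_col_surj mx ux j, mono_col_surj mx ux k).
rewrite -(monomial_conj_supp (B:=B) mx ux) ?(mulmxA x) ?mulmxV ?mul1mx // -supp_preim.
exact: (implyP (forallP (suppB _) _)).
Qed.

End BlockSubgroups.

(** * Isometry groups of forms *)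

Section FormIsometries.
Variables (F : fieldType) (m : nat) (phi : 'M[F]_m -> 'M[F]_m) (J : 'M[F]_m).
Hypotheses (phiM : {morph phi : A B / A *m B}) (phi1 : phi 1%:M = 1%:M).
Hypothesis uJ : J \in unitmx.
Implicit Types A B : 'M[F]_m.

Definition is_isometry A := (phi A)^T *m J *m A == J.

Lemma isometry_unit A : is_isometry A -> A \in unitmx.
Proof.
move/eqP=> isoA; suff /mulmx1_unit[] : (invmx J *m (phi A)^T *m J) *m A = 1%:M by [].
by rewrite -!mulmxA (mulmxA (phi A)^T) isoA mulVmx.
Qed.

Lemma isometryM A B : is_isometry A -> is_isometry B -> is_isometry (A *m B).
Proof.
move=> /eqP isoA /eqP isoB; apply/eqP.
by rewrite phiM trmx_mul !mulmxA -(mulmxA _ _ J) -(mulmxA _ _ A) isoA.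
Qed.

Lemma phi_unitmx A : A \in unitmx -> phi A \in unitmx.
Proof.
by move=> uA; have /mulmx1_unit[] : phi A *m phi (invmx A) = 1%:M by rewrite -phiM mulmxV.
Qed.

Lemma phi_invmx A : A \in unitmx -> phi (invmx A) = invmx (phi A).
Proof.
move=> uA; have phiAV : phi A *m phi (invmx A) = 1%:M by rewrite -phiM mulmxV.
by rewrite -[LHS]mul1mx -(mulVmx (phi_unitmx uA)) -mulmxA phiAV mulmx1.
Qed.

Lemma isometryV A : is_isometry A -> is_isometry (invmx A).
Proof.
move=> isoA; have uA := isometry_unit isoA; apply/eqP; move/eqP: isoA => isoA.
rewrite phi_invmx // -{1}isoA !mulmxA -trmx_mul mulmxV ?phi_unitmx // tr_scalar_mx mul1mx.
by rewrite -mulmxA mulmxV // mulmx1.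
Qed.

Lemma isometry_group_closed : mx_group_closed [pred A | is_isometry A].
Proof.
by split=> [A|A B|A]; rewrite !inE; [exact: isometry_unit|exact: isometryM|exact: isometryV].
Qed.

Lemma perm_mx_isometry (s : {perm 'I_m}) :
  phi (perm_mx s) = perm_mx s -> (forall i j, J (s i) (s j) = J i j) ->
  is_isometry (perm_mx s).
Proof.
move=> phi_s Js; apply/eqP; rewrite phi_s tr_perm_mx -row_permE.
rewrite -[s in perm_mx s]invgK -col_permE; apply/matrixP => i j; rewrite !mxE.
by rewrite -[in RHS](permKV s i) -[in RHS](permKV s j) Js.
Qed.

Lemma isometry_mono_col (tau : 'I_m -> 'I_m) A :
  (forall i l, (J i l != 0) = (l == tau i)) ->
  (forall i l, (phi A i l != 0) = (A i l != 0)) ->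
  monomial A -> is_isometry A -> {morph mono_col A : i / tau i}.
Proof.
move=> Jsupp phi_supp mA isoA; have uA := isometry_unit isoA.
have Jsupp_conj i l : (J i l != 0) = (J (mono_col A i) (mono_col A l) != 0).
  have := congr1 (fun M : 'M[F]_m => M (mono_col A i) (mono_col A l)) (eqP isoA).
  rewrite /= -mulmxA mxE (big_only1 i) // => [|k ki _]; last first.
    apply/eqP; rewrite !mxE mulf_eq0 -[phi A _ _ == 0]negbK phi_supp mono_colP //.
    by rewrite (inj_eq (mono_col_inj mA uA)) eq_sym (negbTE ki).
  rewrite !mxE (big_only1 l) // => [<-|k kl _]; last first.
    by rewrite (@mono_col_zero _ _ A) ?mulr0 // (inj_eq (mono_col_inj mA uA)) eq_sym.
  by rewrite !mulf_eq0 !negb_or phi_supp !mono_col_neq0 ?andbT.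
by move=> i; apply/eqP; rewrite -Jsupp -Jsupp_conj Jsupp.
Qed.

End FormIsometries.

(** * The four classical groups *)

Lemma perm_mx_supp (R : nzRingType) m (s : {perm 'I_m}) i j :
  (perm_mx s i j != 0 :> R) = (j == s i).
Proof. by rewrite !mxE (eq_sym j); case: (s i == j); rewrite ?mulr1n ?mulr0n ?oner_neq0 ?eqxx. Qed.

Lemma supp_inj_unit (F : fieldType) m (J : 'M[F]_m) (f : 'I_m -> 'I_m) : injective f ->
  (forall i l, (J i l != 0) = (l == f i)) -> J \in unitmx.
Proof.
move=> f_inj Jsupp; pose s := perm f_inj.
have -> : J = diag_mx (\row_i J i (s i)) *m perm_mx s.
  apply/matrixP => i l; rewrite mul_diag_mx !mxE !permE eq_sym.
  by case: eqP => [<-|/eqP]; rewrite ?mulr1 ?mulr0 //; rewrite -Jsupp negbK => /eqP.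
rewrite unitmx_mul unitmx_perm andbT unitmxE det_diag unitfE.
by apply/prodf_neq0 => i _; rewrite mxE permE Jsupp.
Qed.

Lemma eq_rev_ord m (i l : 'I_m) : (l == rev_ord i) = (i + l == m.-1)%N.
Proof.
have := ltn_ord i; have := ltn_ord l => lm im.
by apply/eqP/eqP => [->|E]; [rewrite /=; lia | apply: ord_inj => /=; lia].
Qed.

Lemma form_herm_supp t n (F : finFieldType) i l :
  (form_herm t n F i l != 0) = (l == rev_ord i).
Proof. by rewrite mxE eq_rev_ord; case: ifP; rewrite ?oner_neq0 ?eqxx. Qed.

Lemma form_sp_supp n (F : finFieldType) i l :
  (form_sp Sp_even n F i l != 0) = (l == rev_ord i).
Proof.
rewrite mxE eq_rev_ord; case: ifP; rewrite ?eqxx //.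
by case: ifP; rewrite ?oppr_eq0 oner_neq0.
Qed.

Lemma pchar_nat_sqrt_card (F : finFieldType) q : #|F| = (q ^ 2)%N -> [pchar F].-nat q.
Proof.
move=> cardF; have [p p_pr pcharFp] := finPcharP F.
have : p.-nat #|F| by move: (pprimeChar_pgroup pcharFp); rewrite /pgroup cardsT.
rewrite (eq_pnat _ (pcharf_eq pcharFp)) cardF => /pnat_dvd; apply.
by rewrite expnS dvdn_mulr.
Qed.

Section FrobeniusMatrices.
Variables (F : fieldType) (q m : nat).
Hypothesis pcharFq : [pchar F].-nat q.
Local Notation frob A := (map_mx (fun a : F => a ^+ q) A).

Lemma pchar_nat_gt0 : (0 < q)%N.
Proof. by case/andP: pcharFq. Qed.

Lemma frob0 : 0 ^+ q = 0 :> F.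
Proof. by rewrite expr0n eqn0Ngt pchar_nat_gt0. Qed.

Lemma frob_neq0 (a : F) : (a ^+ q != 0) = (a != 0).
Proof. by rewrite expf_eq0 pchar_nat_gt0. Qed.

Lemma frob_mxM : {morph (fun A : 'M[F]_m => frob A) : A B / A *m B}.
Proof.
move=> A B; apply/matrixP => i j; rewrite !mxE.
rewrite (big_morph (fun a : F => a ^+ q) (fun a b => exprDn_pchar a b pcharFq) frob0).
by apply: eq_bigr => k _; rewrite exprMn !mxE.
Qed.

Lemma frob_mx_supp (A : 'M[F]_m) i j : (frob A i j != 0) = (A i j != 0).
Proof. by rewrite mxE frob_neq0. Qed.

Lemma frob_perm_mx (s : {perm 'I_m}) : frob (perm_mx s) = perm_mx s.
Proof. by apply/matrixP => i j; rewrite !mxE; case: (_ == _); rewrite /= ?expr1n ?frob0. Qed.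

Lemma frob_mx1 : frob (1%:M : 'M[F]_m) = 1%:M.
Proof. by rewrite -perm_mx1 frob_perm_mx. Qed.

End FrobeniusMatrices.

Section OrthogonalGroup.
Variables (q n : nat) (F : finFieldType).
Local Notation N := (n.*2.+1).
Local Notation quad := (@quad SO_odd n F).
Implicit Types (v : 'cV[F]_N) (a b : 'I_N) (c d : F).

Lemma rev_ord_fixed a : (rev_ord a == a) = (a == n :> nat).
Proof. by rewrite eq_sym eq_rev_ord /=; apply/eqP/eqP; lia. Qed.

Lemma quad_scale c v : quad (c *: v) = c ^+ 2 * quad v.
Proof.
rewrite /Defs.quad mulr_sumr; apply: eq_bigr => k _; rewrite !mxE.
case: ifP => _; first by rewrite mulrACA -expr2.
by case: ifP => _; rewrite ?mulr0 // exprMn.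
Qed.

Lemma quad_delta a c : quad (c *: delta_mx a 0 : 'cV[F]_N) = if a == n :> nat then c ^+ 2 else 0.
Proof.
rewrite /Defs.quad (big_only1 a) // => [|k ka _]; last first.
  by rewrite !mxE (negbTE ka) /= mulr0 mul0r; case: ifP => _ //; case: ifP => _ //; rewrite expr0n.
rewrite !mxE eqxx /= mulr1; case: ifP => [an|]; last by case: ifP.
by rewrite (ltn_eqF an) rev_ord_fixed (ltn_eqF an) /= !mulr0.
Qed.

Lemma quad_delta2 a b c d : a != b -> a != n :> nat -> b != n :> nat ->
  quad (c *: delta_mx a 0 + d *: delta_mx b 0 : 'cV[F]_N) = if b == rev_ord a then c * d else 0.
Proof.
move=> ab an bn; rewrite eq_rev_ord addnC.
rewrite /Defs.quad (bigD1 a) //= (bigD1 b) 1?eq_sym //= big1 => [|k /andP[ka kb]]; last first.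
  rewrite !mxE (negbTE ka) (negbTE kb) /= !mulr0 addr0 mul0r.
  by case: ifP => _ //; case: ifP => _ //; rewrite expr0n.
rewrite addr0 !mxE !eqxx (negbTE ab) (eq_sym b a) (negbTE ab) /= !mulr1 !mulr0 !addr0 ?add0r.
have rv (u v : 'I_N) : (rev_ord u == v) = (u + v == n.*2)%N by rewrite eq_sym eq_rev_ord.
have not_fix (u : 'I_N) : u != n :> nat -> (u + u == n.*2)%N = false.
  by move=> /eqP uN; apply/negbTE/eqP; lia.
rewrite !andbT !rv !not_fix // [(b + a)%N]addnC /= !mulr0 !add0r !addr0.
have aN : (a < n.*2.+1)%N := ltn_ord a; have bN : (b < n.*2.+1)%N := ltn_ord b.
move/eqP: an => an; move/eqP: bn => bn.
case: (eqVneq (a + b)%N n.*2) => [|/eqP] hab; repeat case: ifP => ?;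
  rewrite ?mulr1 ?mul1r ?mulr0 ?mul0r ?addr0 ?add0r ?(mulrC d) //; lia.
Qed.

Lemma quad_perm_mx (s : {perm 'I_N}) v :
  {morph s : j / rev_ord j} -> (forall j, (s j < n)%N = (j < n)%N) ->
  quad (perm_mx s *m v) = quad v.
Proof.
move=> s_rev s_lt; rewrite -row_permE /quad [RHS](reindex_inj (@perm_inj _ s)) /=.
apply: eq_bigr => k _; rewrite !mxE s_lt s_rev.
by rewrite -!rev_ord_fixed -s_rev (inj_eq (@perm_inj _ s)).
Qed.

(* x fixes the anisotropic coordinate (evaluate quad on e_i) and maps hyperbolic
   pairs to hyperbolic pairs (evaluate quad on e_i + e_l) *)
Lemma so_mono_col_rev x : x \in classical_group SO_odd q n F -> monomial x ->
  {morph mono_col x : i / rev_ord i}.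
Proof.
rewrite inE => /andP[/forallP quad_x /eqP det_x] mx.
have ux : x \in unitmx by rewrite unitmxE det_x unitr1.
have quad_xE v : quad (x *m v) = quad v by apply/eqP.
pose e i : 'cV[F]_N := delta_mx i 0.
have xe i : x *m e (mono_col x i) = x i (mono_col x i) *: e i by apply: mono_col_mul_delta.
have mid i : (mono_col x i == n :> nat) = (i == n :> nat).
  have := quad_xE (e (mono_col x i)); rewrite xe -[e (mono_col x i)]scale1r !quad_delta.
  have nz : x i (mono_col x i) ^+ 2 != 0 by rewrite sqrf_eq0 mono_col_neq0.
  by do 2!case: ifP => //; move=> _ _ /eqP; rewrite ?(negbTE nz) // expr1n eq_sym oner_eq0.
have pair (i l : 'I_N) : i != l -> i != n :> nat -> l != n :> nat ->
    (mono_col x l == rev_ord (mono_col x i)) = (l == rev_ord i).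
  move=> il iN lN; have := quad_xE (e (mono_col x i) + e (mono_col x l)).
  rewrite mulmxDr !xe -[e (mono_col x i)]scale1r -[e (mono_col x l)]scale1r.
  rewrite !quad_delta2 ?mid ?(inj_eq (mono_col_inj mx ux)) //.
  have := mulf_neq0 (mono_col_neq0 i mx) (mono_col_neq0 l mx) => nz.
  by do 2!case: ifP => //; move=> _ _ /eqP; rewrite ?(negbTE nz) // mulr1 eq_sym oner_eq0.
move=> i; have [iN|iN] := eqVneq (i : nat) n.
  have fix_i : rev_ord i = i by apply/eqP; rewrite rev_ord_fixed iN.
  by rewrite fix_i; apply/esym/eqP; rewrite rev_ord_fixed mid iN.
have riN : rev_ord i != n :> nat by rewrite -rev_ord_fixed (inj_eq rev_ord_inj) rev_ord_fixed.
have iri : i != rev_ord i by rewrite eq_sym rev_ord_fixed.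
by apply/eqP; rewrite pair // eqxx.
Qed.

End OrthogonalGroup.

Lemma bn_NE t q n (F : finFieldType) x :
  (x \in bn_N t q n F) = (x \in classical_group t q n F) && monomial x.
Proof. by rewrite inE. Qed.

Section ClassicalGroupStructure.
Variables (t : cgtype) (q n : nat) (F : finFieldType).
Hypothesis cardF : #|F| = (if cg_is_unitary t then q ^ 2 else q)%N.
Local Notation N := (dimN t n).

Lemma unitary_pchar_nat : cg_is_unitary t -> [pchar F].-nat q.
Proof. by move=> unit_t; apply: pchar_nat_sqrt_card; rewrite cardF unit_t. Qed.

Lemma unitary_groupE A : cg_is_unitary t ->
  (A \in classical_group t q n F) = is_isometry (map_mx (fun a : F => a ^+ q)) (form_herm t n F) A.
Proof. by case: t A => // A _; rewrite inE. Qed.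

Lemma classical_group_closed : mx_group_closed (mem (classical_group t q n F)).
Proof.
have [unit_t|] := boolP (cg_is_unitary t).
  have pcharFq := unitary_pchar_nat unit_t.
  apply: eq_mx_group_closed (isometry_group_closed (frob_mxM pcharFq) (frob_mx1 _ pcharFq)
    (supp_inj_unit rev_ord_inj (form_herm_supp F))).
  by move=> A; rewrite inE unitary_groupE.
case: t => // _.
  split=> [A|A B|A]; rewrite !inE.
  + by case/andP=> _ /eqP detA; rewrite unitmxE detA unitr1.
  + move=> /andP[/forallP quadA /eqP detA] /andP[/forallP quadB /eqP detB].
    rewrite det_mulmx detA detB mulr1 eqxx andbT; apply/forallP => v.
    by rewrite -mulmxA (eqP (quadA _)) (eqP (quadB _)).
  move=> /andP[/forallP quadA /eqP detA]; have uA : A \in unitmx by rewrite unitmxE detA unitr1.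
  rewrite det_inv detA invr1 eqxx andbT; apply/forallP => v.
  by rewrite -(eqP (quadA _)) mulmxA mulmxV // mul1mx.
apply: eq_mx_group_closed (isometry_group_closed (phi := id) (fun _ _ => erefl) erefl
  (supp_inj_unit rev_ord_inj (form_sp_supp F))).
by move=> A; rewrite !inE.
Qed.

Lemma bn_N_mono_col_rev x : x \in bn_N t q n F -> {morph mono_col x : i / rev_ord i}.
Proof.
rewrite bn_NE => /andP[xG mx]; have [unit_t|] := boolP (cg_is_unitary t).
  have pcharFq := unitary_pchar_nat unit_t; rewrite unitary_groupE // in xG.
  exact: (isometry_mono_col (phi := map_mx (fun a : F => a ^+ q))
    (supp_inj_unit rev_ord_inj (form_herm_supp F)) (form_herm_supp F)
    (frob_mx_supp pcharFq x) mx xG).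
case: t x mx xG => // x mx xG _; first exact: so_mono_col_rev xG mx.
rewrite inE in xG; exact: (isometry_mono_col (phi := id)
  (supp_inj_unit rev_ord_inj (form_sp_supp F)) (form_sp_supp F) (fun _ _ => erefl) mx xG).
Qed.

Lemma bn_N_perm (s : {perm 'I_N}) : {morph s : j / rev_ord j} ->
  (forall j, (s j < n)%N = (j < n)%N) -> exists2 w, w \in bn_N t q n F & mono_col w =1 s.
Proof.
move=> s_rev s_lt.
have rev_s i j : (s j == rev_ord (s i)) = (j == rev_ord i) by rewrite -s_rev (inj_eq perm_inj).
have [mP P_s] := monomial_supp (@perm_mx_supp F _ s).
have [unit_t|] := boolP (cg_is_unitary t).
  exists (perm_mx s) => //; rewrite bn_NE mP andbT unitary_groupE //.
  apply: perm_mx_isometry (frob_perm_mx (unitary_pchar_nat unit_t) s) _ => i j.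
  by rewrite !mxE -!eq_rev_ord rev_s.
case: t s s_rev s_lt rev_s mP P_s => // s s_rev s_lt rev_s mP P_s _.
  (* rescaling by the sign of s brings the determinant to 1 *)
  pose c : F := (-1) ^+ s.
  have [mw w_s] : monomial (c *: perm_mx s) /\ mono_col (c *: perm_mx s) =1 s.
    by apply: monomial_supp => i j; rewrite mxE mulf_eq0 negb_or signr_eq0 perm_mx_supp.
  exists (c *: perm_mx s) => //; rewrite bn_NE mw andbT inE; apply/andP; split.
    by apply/forallP => v; rewrite -scalemxAl quad_scale quad_perm_mx // sqrr_sign mul1r.
  rewrite detZ det_perm -exprSr (_ : (n.*2.+2 = 2 * n.+1)%N) ?exprM ?sqrr_sign ?expr1n //.
  lia.
exists (perm_mx s) => //; rewrite bn_NE mP andbT inE.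
by apply: (perm_mx_isometry (phi := id)) => // i j; rewrite !mxE -!eq_rev_ord rev_s s_lt.
Qed.

End ClassicalGroupStructure.

Local Close Scope ring_scope.

(** * Standard and pure Levi subgroups *)

Lemma dimN_bounds t n : n.*2 <= dimN t n <= n.*2.+1.
Proof. by case: t => /=; lia. Qed.

Section StandardLevi.
Variables (t : cgtype) (n r : nat).
Local Notation N := (dimN t n).
Local Notation joinedr := (@joined t n (left_connected n r)).
Local Notation central := (@central N n r).

Lemma joined_central j k : joinedr j k -> (j \in central) && (k \in central).
Proof.
have := dimN_bounds t n => bnd; case/existsP => i /andP[]; rewrite !inE => ir.
have := ltn_ord i; case: ifP => [/eqP i0 iN|_ iN].
  have r_gt0 : 0 < r by move: ir; rewrite i0.
  by case/andP=> /andP[? ?] /andP[? ?]; apply/andP; split; apply/andP; split; lia.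
by case/or4P => /andP[/eqP ? /eqP ?]; apply/andP; split; apply/andP; split; lia.
Qed.

Lemma joined_sym : symmetric joinedr.
Proof.
move=> j k; apply/existsP/existsP => -[i /andP[iI supp]]; exists i; rewrite iI /=;
  case: ifP supp => _; rewrite 1?andbC //;
  by case/or4P => /andP[-> ->]; rewrite ?orbT ?andbT.
Qed.

Lemma connect_central_mid (c : 'I_N) : 0 < r <= n -> c = n.-1 :> nat ->
  {in central, forall j, connect joinedr j c}.
Proof.
case/andP=> r_gt0 r_le_n cE j; have := dimN_bounds t n => bnd.
have n_gt0 : 0 < n by lia.
have mid (k : 'I_N) : n.-1 <= k <= N - n -> connect joinedr k c.
  move=> k_mid; apply: connect1; apply/existsP; exists (Ordinal n_gt0); rewrite inE r_gt0 /=.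
  by rewrite k_mid /= cE; lia.
have low d (k : 'I_N) : k + d = n.-1 -> k \in central -> connect joinedr k c.
  elim: d k => [|d IHd] k kd kC; first by apply: mid; lia.
  have k1N : k.+1 < N by lia.
  have k1C : Ordinal k1N \in central by move: kC; rewrite !inE /=; lia.
  apply: connect_trans (IHd (Ordinal k1N) _ k1C); last by rewrite /=; lia.
  have dn : d.+1 < n by lia.
  apply: connect1; apply/existsP; exists (Ordinal dn); rewrite inE /=.
  move: kC; rewrite inE => kC; apply/andP; split; first lia.
  by apply/or4P; apply: Or41; apply/andP; split; apply/eqP; lia.
have high d (k : 'I_N) : k = N - n + d :> nat -> k \in central -> connect joinedr k c.
  elim: d k => [|d IHd] k kd kC; first by apply: mid; lia.
  have kN := ltn_ord k; have k1N : k.-1 < N by lia.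
  have k1C : Ordinal k1N \in central by move: kC; rewrite !inE /=; lia.
  apply: connect_trans (IHd (Ordinal k1N) _ k1C); last by rewrite /=; lia.
  have dn : d.+1 < n by move: kC; rewrite inE; lia.
  apply: connect1; apply/existsP; exists (Ordinal dn); rewrite inE /=.
  move: kC; rewrite inE => kC; apply/andP; split; first lia.
  by apply/or4P; apply: Or43; apply/andP; split; apply/eqP; lia.
case: (ltnP j n.-1) => [jlo|jhi] jC; first by apply: (low (n.-1 - j)) => //; lia.
case: (leqP j (N - n)) => [jmid|jup]; first by apply: mid; lia.
by apply: (high (j - (N - n))) => //; lia.
Qed.

Lemma connect_left_connected j k : r <= n -> connect joinedr j k = block_supp central j k.
Proof.
move=> r_le_n; apply/idP/idP.
  case/connectP => p; elim: p j => [|a p IHp] j /=; first by move=> _ ->; rewrite /block_supp eqxx.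
  case/andP => /joined_central/andP[jC aC] pa kE; move: (IHp a pa kE).
  by rewrite /block_supp jC; case/orP => [/eqP <-|/andP[_ ->]]; rewrite ?aC orbT.
case/orP => [/eqP <-|/andP[jC kC]]; first exact: connect0.
have [r0|r_gt0] := posnP r.
  have -> : j = k.
    by apply: ord_inj; move: jC kC; rewrite !inE r0 subn0; have := dimN_bounds t n; lia.
  exact: connect0.
have cN : n.-1 < N by have := dimN_bounds t n; lia.
have con := @connect_central_mid (Ordinal cN) (introT andP (conj r_gt0 r_le_n)) erefl.
by apply: connect_trans (con _ jC) _; rewrite (sym_connect_sym joined_sym) con.
Qed.

End StandardLevi.

Section PureLevi.
Variables (t : cgtype) (q n : nat) (F : finFieldType).
Hypothesis (cardF : #|F| = (if cg_is_unitary t then q ^ 2 else q)).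
Local Notation N := (dimN t n).
Local Notation G := (classical_group t q n F).

Lemma std_levi_central r : r <= n ->
  std_levi t q F (left_connected n r) = levi_block G (central N n r).
Proof.
move=> r_le_n; apply/setP => A; rewrite !inE; congr (_ && _).
by apply: eq_forallb => j; apply: eq_forallb => k; rewrite connect_left_connected.
Qed.

Lemma conjm_levi_block x C : x \in bn_N t q n F ->
  conjm x (levi_block G C) = levi_block G (mono_preim x C).
Proof.
by rewrite bn_NE => /andP[xG mx]; exact: levi_block_conj (classical_group_closed n cardF) xG mx.
Qed.

Lemma pure_leviP (L : {set 'M[F]_N}) :
  @pure_levi t q n F L <-> exists2 C, rev_admissible C & L = levi_block G C.
Proof.
have [bnd_lo bnd_hi] := andP (dimN_bounds t n).
split=> [[x xN [r r_le_n ->]]|[C admC ->]].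
  exists (mono_preim x (central N n r)); last by rewrite std_levi_central // conjm_levi_block.
  exact/rev_admissible_preim/rev_admissible_central/bnd_lo/(bn_N_mono_col_rev cardF).
have [s [r r_le_n [s_rev s_lt sC]]] := rev_admissible_centralize (dimN_bounds t n) admC.
have [w wN w_s] := bn_N_perm cardF s_rev s_lt.
exists w => //; exists r => //; rewrite std_levi_central // conjm_levi_block // -sC.
by congr levi_block; apply/setP => j; rewrite !inE w_s.
Qed.

End PureLevi.

Theorem proposition2p2 (t : cgtype) (q n : nat) (F : finFieldType)
  (hn : (0 < n)%N)
  (hF : #|F| = (if cg_is_unitary t then q ^ 2 else q)%N)
  (L M : {set 'M[F]_(dimN t n)}) (x : 'M[F]_(dimN t n)) :
  @pure_levi t q n F L -> @pure_levi t q n F M -> x \in @bn_N t q n F ->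
  @pure_levi t q n F (conjm x L :&: M).
Proof.
(* the argument is uniform in n *)
move=> /(pure_leviP hF)[C admC ->] /(pure_leviP hF)[D admD ->] xN.
apply/(pure_leviP hF); exists (mono_preim x C :&: D).
  exact/rev_admissibleI/admD/rev_admissible_preim/admC/(bn_N_mono_col_rev hF).
by rewrite conjm_levi_block // levi_blockI.
Qed.
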